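(* Let $\Omega=\{\omega_1<\dots<\omega_{|\mathcal{X}|}\}\subset\{1,\dots,|\mathcal{Y}|\}$ with $M_\Omega$ invertible, let $A=M_{\Omega}^{-1}M(1\!:\!|\mathcal{X}|)P_{X|Y_1}^{-1}$ with columns $a_1,\dots,a_{|\mathcal{X}|}$, and let $J_u\in\mathbb{R}^{|\mathcal{X}|}$ satisfy $\sum_x|J_u(x)|\le1$. Define $V\in\mathbb{R}^{|\mathcal{Y}|}$ by $V(\omega_i)=(M_\Omega^{-1}M\begin{bmatrix}P_{X|Y_1}^{-1}J_u\\0\end{bmatrix})(i)$ for $1\le i\le|\mathcal{X}|$ and $V(j)=0$ for $j\notin\Omega$. Then $\|V\|_1\le r$, where $r=\max_i \mathbf{1}^T|a_i|$ and $|a_i|$ denotes the entrywise absolute value of $a_i$.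
   Context: Setting: $X,Y$ on finite alphabets with $|\mathcal{X}|<|\mathcal{Y}|$; $P_{X|Y}\in\mathbb{R}^{|\mathcal{X}|\times|\mathcal{Y}|}$ has full row rank and $P_{X|Y}=[P_{X|Y_1},P_{X|Y_2}]$ with $P_{X|Y_1}$ (first $|\mathcal{X}|$ columns) invertible. With an SVD $P_{X|Y}=U\Sigma V^T$, $V=[v_1,\dots,v_{|\mathcal{Y}|}]$, set $M=[v_1,\dots,v_{|\mathcal{X}|}]^T$. $M_\Omega$ is the submatrix of $M$ with columns indexed by $\Omega$, and $M(1\!:\!|\mathcal{X}|)$ the submatrix of its first $|\mathcal{X}|$ columns. The zero block has size $|\mathcal{Y}|-|\mathcal{X}|$. *)

From HB Require Import structures.
From mathcomp Require Import all_boot all_order all_algebra.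
Set Implicit Arguments. Unset Strict Implicit. Unset Printing Implicit Defensive.
Import Order.TTheory GRing.Theory Num.Theory.
Local Open Scope ring_scope.

Definition is_svd (R : realFieldType) (m n : nat) (P : 'M[R]_(m, n))
  (U : 'M[R]_m) (S : 'M[R]_(m, n)) (Vm : 'M[R]_n) : Prop :=
  [/\ U *m U^T = 1%:M /\ U^T *m U = 1%:M,
      Vm *m Vm^T = 1%:M /\ Vm^T *m Vm = 1%:M,
      (forall (i : 'I_m) (j : 'I_n), (i : nat) != j -> S i j = 0),
      (forall (i : 'I_m) (j : 'I_n), (i : nat) = j -> 0 <= S i j)
    & P = U *m S *m Vm^T].

Definition l1norm (R : realDomainType) (n : nat) (v : 'cV[R]_n) : R :=
  \sum_(j < n) `|v j 0|.

From HB Require Import structures.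
From mathcomp Require Import all_boot all_order all_algebra.
Import Order.TTheory GRing.Theory Num.Theory.
Local Open Scope ring_scope.

(* V is A Ju scattered into the positions Omega, so ||V||_1 = ||A Ju||_1.  The
   l1-operator norm of A is its largest column l1-norm r, hence
   ||A Ju||_1 <= r ||Ju||_1 <= r.  The SVD, rank and invertibility hypotheses
   only serve to make A meaningful; the bound holds for any matrices. *)

Lemma ltn_homo_ord_inj {m n : nat} {f : 'I_m -> 'I_n} :
  (forall i j : 'I_m, (i < j)%N -> (f i < f j)%N) -> injective f.
Proof.
move=> f_inc i j fij.
by case: (ltngtP i j) => [/f_inc | /f_inc | /val_inj //]; rewrite fij ltnn.
Qed.

Lemma mul_col_mx0 {R : pzRingType} {m n p q : nat} (M : 'M[R]_(m, n + p))
    (x : 'M[R]_(n, q)) :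
  M *m col_mx x 0 = lsubmx M *m x.
Proof. by rewrite -{1}(hsubmxK M) mul_row_col mulmx0 addr0. Qed.

Section L1Norm.
Context {R : realDomainType}.

Lemma l1norm_scatter {m n : nat} {f : 'I_m -> 'I_n} {x : 'cV[R]_m}
    {v : 'cV[R]_n} :
  injective f -> (forall i, v (f i) 0 = x i 0) ->
  (forall j, (forall i, j != f i) -> v j 0 = 0) ->
  l1norm v = l1norm x.
Proof.
move=> f_inj v_in v_out; rewrite /l1norm (bigID [in f @: setT]) /=.
rewrite [X in _ + X]big1 ?addr0; last first.
  move=> j j_out; rewrite v_out ?normr0 // => i.
  by apply: contra j_out => /eqP ->; rewrite imset_f ?inE.
rewrite big_imset /=; last by move=> i j _ _; apply: f_inj.
by rewrite big_set /=; apply: eq_bigr => i _; rewrite v_in.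
Qed.

Definition mx_norm1 {m n : nat} (A : 'M[R]_(m, n)) : R :=
  \big[Num.max/0]_(j < n) l1norm (col j A).

Lemma mx_norm1_ge0 {m n : nat} (A : 'M[R]_(m, n)) : 0 <= mx_norm1 A.
Proof. exact: bigmax_ge_id. Qed.

Lemma l1norm_col_le {m n : nat} (A : 'M[R]_(m, n)) (j : 'I_n) :
  \sum_i `|A i j| <= mx_norm1 A.
Proof.
apply: le_trans (le_bigmax _ _ j); rewrite /l1norm.
by under [leRHS]eq_bigr do rewrite mxE.
Qed.

Lemma l1norm_mulmx_le {m n : nat} (A : 'M[R]_(m, n)) (x : 'cV[R]_n) :
  l1norm (A *m x) <= mx_norm1 A * l1norm x.
Proof.
have triangle : l1norm (A *m x) <= \sum_i \sum_j `|A i j| * `|x j 0|.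
  apply: ler_sum => i _; rewrite mxE.
  by apply: le_trans (ler_norm_sum _ _ _) _; under eq_bigr do rewrite normrM.
apply: le_trans triangle _; rewrite exchange_big /= /l1norm mulr_sumr.
by apply: ler_sum => j _; rewrite -mulr_suml ler_wpM2r ?l1norm_col_le.
Qed.

End L1Norm.

Theorem proposition7 (R : realFieldType) (nx k : nat) (hk : (0 < k)%N)
  (P : 'M[R]_(nx, nx + k))
  (hrank : \rank P = nx)
  (hP1 : lsubmx P \in unitmx)
  (U : 'M[R]_nx) (S : 'M[R]_(nx, nx + k)) (Vm : 'M[R]_(nx + k))
  (hsvd : is_svd P U S Vm)
  (M : 'M[R]_(nx, nx + k))
  (hM : forall (i : 'I_nx) (j : 'I_(nx + k)), M i j = Vm j (lshift k i))
  (w : 'I_nx -> 'I_(nx + k))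
  (hw : forall i j : 'I_nx, (i < j)%N -> (w i < w j)%N)
  (hMO : colsub w M \in unitmx)
  (Ju : 'cV[R]_nx)
  (hJ : \sum_(x < nx) `|Ju x 0| <= 1)
  (V : 'cV[R]_(nx + k))
  (hVin : forall i : 'I_nx,
     V (w i) 0 = (invmx (colsub w M) *m M
                   *m col_mx (invmx (lsubmx P) *m Ju) (0 : 'cV[R]_k)) i 0)
  (hVout : forall j : 'I_(nx + k), (forall i : 'I_nx, j != w i) -> V j 0 = 0) :
  let A := invmx (colsub w M) *m lsubmx M *m invmx (lsubmx P) in
  let r := \big[Num.max/0]_(i < nx) \sum_(j < nx) `|col i A j 0| in
  l1norm V <= r.
Proof.
cbv zeta; set A := invmx _ *m _ *m _; change (l1norm V <= mx_norm1 A).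
have V_in i : V (w i) 0 = (A *m Ju) i 0.
  by rewrite hVin -mulmxA mul_col_mx0 !mulmxA.
rewrite (l1norm_scatter (ltn_homo_ord_inj hw) V_in hVout).
apply: le_trans (l1norm_mulmx_le A Ju) _.
by rewrite -[leRHS]mulr1 ler_wpM2l ?mx_norm1_ge0.
Qed.
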